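(* Let $q$ be an odd prime power, let $t\ge0$ and $k\ge1$ be integers and $n=2k$. Let $\delta\in\mathbb{F}_{q^k}$, let $\alpha\in\mathbb{F}_{q^n}$ satisfy $\alpha^{q^k}=-\alpha$ and $\beta\in\mathbb{F}_{q^n}$ satisfy $\beta^{q^k}=-\beta$. Let $L(x)=\sum_i a_i x^{q^i}$ be a $q$-polynomial with all coefficients $a_i\in\mathbb{F}_{q^k}$. Then $$f(x)=\alpha(x^{q^k}+x+\delta)^t+\beta\,\mathrm{Tr}(x)+L(x)$$ is a permutation polynomial of $\mathbb{F}_{q^n}$ if and only if $L(x)$ is a permutation polynomial of $\mathbb{F}_{q^n}$.
   Context: $\mathrm{Tr}$ denotes the trace function from $\mathbb{F}_{q^n}$ to $\mathbb{F}_q$, $\mathrm{Tr}(x)=x+x^q+\cdots+x^{q^{n-1}}$. A permutation polynomial of $\mathbb{F}_{q^n}$ is one inducing a bijection of $\mathbb{F}_{q^n}$. *)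

From HB Require Import structures.
From mathcomp Require Import all_boot all_order all_algebra all_field.
Set Implicit Arguments. Unset Strict Implicit. Unset Printing Implicit Defensive.
Import GRing.Theory.
Local Open Scope ring_scope.

Definition trF (F : finFieldType) (q n : nat) (x : F) : F :=
  \sum_(i < n) x ^+ (q ^ i).

Definition qlinpoly (F : finFieldType) (q : nat) (a : seq F) (x : F) : F :=
  \sum_(i < size a) a`_i * x ^+ (q ^ i).

Definition odd_prime_power (q : nat) : Prop :=
  exists p m : nat, [/\ prime p, odd p, (0 < m)%N & q = (p ^ m)%N].

(* Let s be the involution x |-> x^(q^k) of F_(q^n) over F_(q^k) and put
   psi x = s x + x. Since s alpha = - alpha, s beta = - beta, and both the
   trace and x^(q^k) + x + delta are s-fixed, while L commutes with s, one
   gets psi (f x) = L (psi x); moreover f x depends on x only through psi x,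
   up to the summand L x. Hence if L is injective, f x = f y forces
   psi x = psi y and then L x = L y. Conversely, if f is a permutation, every
   root z of L satisfies f (z - s z) = f 0, so z is s-fixed; and L maps the
   fixed field onto itself (u = psi (f w) = L (psi w) for f w = u / 2), so L is
   injective there and z = 0. *)
From HB Require Import structures.
From mathcomp Require Import all_boot all_order all_algebra all_field.
From mathcomp Require Import ring.
Set Implicit Arguments. Unset Strict Implicit. Unset Printing Implicit Defensive.
Import GRing.Theory.
Local Open Scope ring_scope.

Section QPowers.

Variables (F : finFieldType) (Q : nat).
Hypothesis QcharF : [pchar F].-nat Q.

Lemma pnat_expQ i : [pchar F].-nat (Q ^ i)%N.
Proof. by rewrite pnatX QcharF. Qed.

Lemma exprQD i (x y : F) : (x + y) ^+ (Q ^ i) = x ^+ (Q ^ i) + y ^+ (Q ^ i).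
Proof. exact/exprDn_pchar/pnat_expQ. Qed.

Lemma exprQN i (x : F) : (- x) ^+ (Q ^ i) = - x ^+ (Q ^ i).
Proof. exact/exprNn_pchar/pnat_expQ. Qed.

Lemma qlinpolyD (a : seq F) x y :
  qlinpoly Q a (x + y) = qlinpoly Q a x + qlinpoly Q a y.
Proof. by rewrite -big_split; apply: eq_bigr => i _; rewrite exprQD mulrDr. Qed.

Lemma qlinpolyN (a : seq F) x : qlinpoly Q a (- x) = - qlinpoly Q a x.
Proof. by rewrite -sumrN; apply: eq_bigr => i _; rewrite exprQN mulrN. Qed.

Lemma qlinpolyB (a : seq F) x y :
  qlinpoly Q a (x - y) = qlinpoly Q a x - qlinpoly Q a y.
Proof. by rewrite qlinpolyD qlinpolyN. Qed.

Lemma qlinpoly0 (a : seq F) : qlinpoly Q a 0 = 0.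
Proof. by apply: (addrI (qlinpoly Q a 0)); rewrite -qlinpolyD !addr0. Qed.

Lemma trF_double k (x : F) :
  trF Q (2 * k) x = \sum_(i < k) (x ^+ (Q ^ k) + x) ^+ (Q ^ i).
Proof.
rewrite /trF mul2n -addnn big_split_ord /= -big_split /=.
by apply: eq_bigr => i _; rewrite exprQD addrC -exprM -expnD.
Qed.

Section Conjugation.

Variable k : nat.
Hypothesis cardF : #|F| = (Q ^ (2 * k))%N.

Definition qconj (x : F) : F := x ^+ (Q ^ k).

Lemma qconjK : involutive qconj.
Proof.
by move=> x; rewrite /qconj -exprM -expnD addnn -mul2n -cardF expf_card.
Qed.

Lemma qconjD x y : qconj (x + y) = qconj x + qconj y.
Proof. exact: exprQD. Qed.

Lemma qconjN x : qconj (- x) = - qconj x.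
Proof. exact: exprQN. Qed.

Lemma qconjM x y : qconj (x * y) = qconj x * qconj y.
Proof. exact: exprMn. Qed.

Lemma qconjX x n : qconj (x ^+ n) = qconj x ^+ n.
Proof. exact: exprAC. Qed.

Lemma qconj0 : qconj 0 = 0.
Proof. by apply: (addrI (qconj 0)); rewrite -qconjD !addr0. Qed.

Lemma qconjV x : qconj x^-1 = (qconj x)^-1.
Proof. exact: exprVn. Qed.

Lemma qconj_nat n : qconj n%:R = n%:R.
Proof.
elim: n => [|n IHn]; first exact: qconj0.
by rewrite -addn1 natrD qconjD IHn /qconj expr1n.
Qed.

Lemma qconj_qlinpoly (a : seq F) x :
  (forall i, (i < size a)%N -> qconj a`_i = a`_i) ->
  qconj (qlinpoly Q a x) = qlinpoly Q a (qconj x).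
Proof.
move=> a_fixed; rewrite /qlinpoly (big_morph qconj qconjD qconj0).
by apply: eq_bigr => i _; rewrite qconjM qconjX a_fixed.
Qed.

Lemma qconj_trF x : qconj (trF Q (2 * k) x) = trF Q (2 * k) x.
Proof.
rewrite !trF_double (big_morph qconj qconjD qconj0).
by apply: eq_bigr => i _; rewrite qconjX qconjD qconjK addrC.
Qed.

Section Twist.

Variables (t : nat) (delta alpha beta : F) (a : seq F).
Hypotheses (delta_fixed : qconj delta = delta)
  (alpha_anti : qconj alpha = - alpha) (beta_anti : qconj beta = - beta)
  (a_fixed : forall i, (i < size a)%N -> qconj a`_i = a`_i).

Local Notation L := (qlinpoly Q a).

Definition twist_poly (x : F) : F :=
  alpha * (qconj x + x + delta) ^+ t + beta * trF Q (2 * k) x + L x.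

Local Notation f := twist_poly.

Lemma twist_polyE x y : qconj x + x = qconj y + y -> f x - f y = L x - L y.
Proof.
by move=> psi_xy; rewrite /f !trF_double -/(qconj x) -/(qconj y) psi_xy; ring.
Qed.

Lemma qconj_twist_poly x : qconj (f x) + f x = L (qconj x + x).
Proof.
have g_fixed : qconj (qconj x + x + delta) = qconj x + x + delta.
  by rewrite !qconjD qconjK delta_fixed (addrC x).
rewrite /f !qconjD !qconjM qconjX g_fixed qconj_trF qconj_qlinpoly //.
rewrite alpha_anti beta_anti qlinpolyD; ring.
Qed.

Lemma twist_poly_inj : injective L -> injective f.
Proof.
move=> L_inj x y fxy.
have psi_xy : qconj x + x = qconj y + y.
  by apply: L_inj; rewrite -!qconj_twist_poly fxy.
by apply/L_inj/eqP; rewrite -subr_eq0 -twist_polyE // fxy subrr.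
Qed.

Lemma qlinpoly_root_fixed z : injective f -> L z = 0 -> qconj z = z.
Proof.
move=> f_inj Lz0; apply/esym/eqP; rewrite -subr_eq0; apply/eqP/f_inj.
have psi0 : qconj (z - qconj z) + (z - qconj z) = qconj 0 + 0.
  by rewrite qconjD qconjN qconjK qconj0; ring.
apply/eqP; rewrite -subr_eq0 twist_polyE // qlinpolyB -qconj_qlinpoly //.
by rewrite Lz0 qconj0 qlinpoly0 !subrr.
Qed.

Lemma qlinpoly_onto_fixed g u : 2%:R != 0 :> F -> cancel g f ->
  qconj u = u -> exists2 w, qconj w = w & L w = u.
Proof.
move=> two_neq0 gK u_fixed; set v := g (u / 2%:R).
exists (qconj v + v); first by rewrite qconjD qconjK addrC.
rewrite -qconj_twist_poly gK qconjM u_fixed qconjV qconj_nat.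
by rewrite -mulrDr -mulr2n -(mulr_natr 2%:R^-1) mulVf ?mulr1.
Qed.

Lemma qlinpoly_inj : 2%:R != 0 :> F -> bijective f -> injective L.
Proof.
move=> two_neq0 [g fK gK] x y Lxy.
apply/eqP; rewrite -subr_eq0; apply/eqP.
have Lz0 : L (x - y) = 0 by rewrite qlinpolyB Lxy subrr.
pose S := [set u | qconj u == u].
have fixed_sub_image : S \subset L @: S.
  apply/subsetP => u; rewrite inE => /eqP u_fixed.
  have [w w_fixed <-] := qlinpoly_onto_fixed two_neq0 gK u_fixed.
  by apply: imset_f; rewrite inE w_fixed.
have /imset_injP L_injS : #|L @: S| == #|S|.
  by rewrite eqn_leq leq_imset_card subset_leq_card.
apply: L_injS; rewrite ?inE ?qconj0 ?Lz0 ?qlinpoly0 //.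
by rewrite qlinpoly_root_fixed //; exact: can_inj fK.
Qed.

End Twist.
End Conjugation.
End QPowers.

Theorem mainTheorem5 (F : finFieldType) (q t k : nat)
    (delta alpha beta : F) (a : seq F) :
  odd_prime_power q -> (1 <= k)%N -> #|F| = (q ^ (2 * k))%N ->
  delta ^+ (q ^ k) = delta ->
  alpha ^+ (q ^ k) = - alpha ->
  beta ^+ (q ^ k) = - beta ->
  (forall i, (i < size a)%N -> a`_i ^+ (q ^ k) = a`_i) ->
  (bijective (fun x : F => alpha * (x ^+ (q ^ k) + x + delta) ^+ t
                           + beta * trF q (2 * k) x + qlinpoly q a x)
   <-> bijective (qlinpoly q a)).
Proof.
move=> [p [m [p_prime p_odd _ q_def]]] _ cardF hdelta halpha hbeta ha.
have pcharF : p \in [pchar F].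
  by apply: (card_finPcharP (n := (m * (2 * k))%N) _ p_prime); rewrite expnM -q_def.
have qcharF : [pchar F].-nat q.
  by rewrite q_def pnatX (eq_pnat _ (pcharf_eq pcharF)) pnat_id.
have two_neq0 : 2%:R != 0 :> F.
  rewrite -(dvdn_pcharf pcharF) dvdn_prime2 //.
  by apply: contraTneq p_odd => ->.
change (bijective (twist_poly q k t delta alpha beta a)
        <-> bijective (qlinpoly q a)).
split=> [f_bij | [g LK _]]; apply: injF_bij.
- exact: (qlinpoly_inj qcharF cardF hdelta halpha hbeta ha two_neq0 f_bij).
- exact: (twist_poly_inj qcharF cardF hdelta halpha hbeta ha (can_inj LK)).
Qed.
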